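(* Let $\Gamma$ be a gain operator on $\ell^\infty_+(\mathcal I)$ satisfying the $\oplus$-MBI property, and for $b\in\ell^\infty_+(\mathcal I)$ let $\Gamma^\oplus_b(s):=b\oplus\Gamma(s)$. Then for each $b\in\ell^\infty_+(\mathcal I)$ there exist fixed points $s_*(b)$ and $s^*(b)$ of $\Gamma^\oplus_b$ such that: (a) every $s\in\mathrm{Fix}(\Gamma^\oplus_b)$ satisfies $s_*(b)\le s\le s^*(b)$; (b) if $b^1\le b^2$ then $s_*(b^1)\le s_*(b^2)$ and $s^*(b^1)\le s^*(b^2)$; (c) for every $s\le s_*(b)$, $(\Gamma^\oplus_b)^n(s)\to s_*(b)$ weak$^*$; (d) for every $s\ge s^*(b)$, $(\Gamma^\oplus_b)^n(s)\to s^*(b)$ weak$^*$.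
   Context: Let $\mathcal I$ be a nonempty countable index set; $\ell^\infty_+(\mathcal I)$ is the cone of nonnegative real families $s=(s_i)_{i\in\mathcal I}$ with $\|s\|:=\sup_i|s_i|<\infty$, ordered componentwise; $\oplus$ is the componentwise maximum. A sequence in $\ell^\infty(\mathcal I)$ converges weak$^*$ (viewing $\ell^\infty=(\ell^1)^*$) iff it is norm-bounded and converges componentwise. $\mathcal K_\infty$: continuous strictly increasing unbounded $\gamma:\mathbb R_+\to\mathbb R_+$ with $\gamma(0)=0$. For $\mathcal J\subset\mathcal I$, $s_{|\mathcal J}$ agrees with $s$ on $\mathcal J$ and is $0$ elsewhere. Gain operator: for each $i$ a finite (possibly empty) $\mathcal I_i\subset\mathcal I\setminus\{i\}$; directed graph $\mathcal G$ with vertices $\mathcal I$ and edges $ji$, $j\in\mathcal I_i$; a pointwise equicontinuous family $\gamma_{ij}\in\mathcal K_\infty$ ($ji\in E(\mathcal G)$); functions $\mu_i:\ell^\infty_+(\mathcal I)\to[0,\infty]$ with (M1) some $\xi\in\mathcal K_\infty$ has $\mu_i(0)=0$, $\mu_i(s)\ge\xi(\|s\|)$; (M2) $\mu_i$ monotone; (M3) for each finite $\mathcal J$, $\mu_i$ restricted to vectors vanishing off $\mathcal J$ is finite-valued and continuous; (M4) for each norm-bounded $A$ and $\varepsilon>0$ there is $\delta>0$ with $\sup_i|\mu_i(s_{|\mathcal I_i})-\mu_i(s^0_{|\mathcal I_i})|\le\varepsilon$ whenever $s^0\in A$, $\|s-s^0\|\le\delta$. $\Gamma_i(s):=\mu_i([\gamma_{ij}(s_j)]_{j\in\mathcal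 I_i})$ (argument zero outside $\mathcal I_i$). $\oplus$-MBI property: there is $\varphi\in\mathcal K_\infty$ such that for all $s,b\in\ell^\infty_+(\mathcal I)$, $s\le b\oplus\Gamma(s)$ implies $\|s\|\le\varphi(\|b\|)$. $\mathrm{Fix}(T)$ denotes the fixed point set of $T$. *)

From Stdlib Require Import Reals List.
From Coquelicot Require Import Coquelicot.
Open Scope R_scope.

Section Defs.
Context {I : Type}.

(** Families s : I -> R; ℓ^∞_+(I) = nonnegative bounded families. *)
Definition bounded (s : I -> R) : Prop := exists M, forall i, Rabs (s i) <= M.
Definition lpos (s : I -> R) : Prop := (forall i, 0 <= s i) /\ bounded s.

(** sup-norm ‖s‖ = sup_i |s_i| (meaningful for bounded s, I nonempty). *)
Definition linf_norm (s : I -> R) : R :=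
  real (Lub_Rbar (fun x => exists i, x = Rabs (s i))).

Definition fle (s t : I -> R) : Prop := forall i, s i <= t i.
Definition oplus (s t : I -> R) : I -> R := fun i => Rmax (s i) (t i).

Definition restr (Idec : forall x y : I, {x = y} + {x <> y})
  (J : list I) (s : I -> R) : I -> R :=
  fun j => if in_dec Idec j J then s j else 0.

Definition vanish_off (J : list I) (s : I -> R) : Prop :=
  forall j, ~ In j J -> s j = 0.

(** weak* convergence of a sequence in ℓ^∞(I): norm-bounded and componentwise *)
Definition wstar_cv (x : nat -> I -> R) (l : I -> R) : Prop :=
  (exists M, forall n i, Rabs (x n i) <= M) /\
  (forall i, is_lim_seq (fun n => x n i) (l i)).

End Defs.

(** class K_∞ of functions R_+ -> R_+ (represented as R -> R, only values
    on R_+ matter) *)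
Definition Kinf (g : R -> R) : Prop :=
  g 0 = 0 /\
  (forall x, 0 <= x -> 0 <= g x) /\
  (forall x, 0 <= x -> forall eps, 0 < eps -> exists d, 0 < d /\
      forall y, 0 <= y -> Rabs (y - x) < d -> Rabs (g y - g x) < eps) /\
  (forall x y, 0 <= x -> x < y -> g x < g y) /\
  (forall M, exists x, 0 <= x /\ M < g x).

Definition Gamma {I : Type} (Idec : forall x y : I, {x = y} + {x <> y})
  (Ii : I -> list I) (gam : I -> I -> R -> R) (mu : I -> (I -> R) -> Rbar)
  (s : I -> R) : I -> R :=
  fun i => real (mu i (restr Idec (Ii i) (fun j => gam i j (s j)))).

Definition gain_operator {I : Type} (Idec : forall x y : I, {x = y} + {x <> y})
  (Ii : I -> list I) (gam : I -> I -> R -> R) (mu : I -> (I -> R) -> Rbar)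
  : Prop :=
  (forall i, ~ In i (Ii i)) /\
  (forall i j, In j (Ii i) -> Kinf (gam i j)) /\
  (forall r, 0 <= r -> forall eps, 0 < eps -> exists d, 0 < d /\
     forall i j, In j (Ii i) -> forall r', 0 <= r' -> Rabs (r' - r) < d ->
       Rabs (gam i j r' - gam i j r) < eps) /\
  (forall i, exists xi, Kinf xi /\ mu i (fun _ => 0) = Finite 0 /\
     forall s, lpos s -> Rbar_le (Finite (xi (linf_norm s))) (mu i s)) /\
  (forall i s t, lpos s -> lpos t -> fle s t -> Rbar_le (mu i s) (mu i t)) /\
  (forall i (J : list I),
     (forall s, lpos s -> vanish_off J s -> is_finite (mu i s)) /\
     (forall s, lpos s -> vanish_off J s -> forall eps, 0 < eps ->
        exists d, 0 < d /\ forall t, lpos t -> vanish_off J t ->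
          linf_norm (fun j => t j - s j) < d ->
          Rabs (real (mu i t) - real (mu i s)) < eps)) /\
  (forall A : (I -> R) -> Prop,
     (forall s, A s -> lpos s) ->
     (exists M, forall s, A s -> linf_norm s <= M) ->
     forall eps, 0 < eps -> exists d, 0 < d /\
       forall s0 s, A s0 -> lpos s -> linf_norm (fun j => s j - s0 j) <= d ->
         forall i, Rabs (real (mu i (restr Idec (Ii i) s))
                         - real (mu i (restr Idec (Ii i) s0))) <= eps).

Definition oplus_MBI {I : Type} (G : (I -> R) -> (I -> R)) : Prop :=
  exists phi, Kinf phi /\
    forall s b, lpos s -> lpos b -> fle s (oplus b (G s)) ->
      linf_norm s <= phi (linf_norm b).

From Pilot Require Import Defs.
From Stdlib Require Import Reals List Lra Classical.
From Coquelicot Require Import Coquelicot.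
Open Scope R_scope.

(* The map [Γ^⊕_b s = b ⊕ Γ(s)] ([Goplus b s]) is monotone and componentwise
   sequentially continuous on nonnegative families, and the MBI property bounds every
   bounded post-fixed point [s ≤ Γ^⊕_b s] by φ(‖b‖); a truncation argument extends
   this bound to post-fixed points not known to be bounded, such as the iterates of
   Γ^⊕_b.  Hence the iterates from 0 increase to the least fixed point, and the
   supremum of all bounded post-fixed points is the greatest one (Knaster-Tarski).
   Iterates starting below the least fixed point are squeezed between it and the
   iterates from 0; iterates starting at [s] above the greatest fixed point are
   squeezed between it and the decreasing iterates from the greatest fixed point for
   the input [b ⊕ s].  Only (M2), (M3) and the continuity of the γ_ij are needed;
   countability of the index set plays no role. *)

Definition nonneg {I : Type} (s : I -> R) : Prop := forall i, 0 <= s i.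

Lemma Lub_Rbar_real_ub (E : R -> Prop) (B : R) :
  (forall x, E x -> x <= B) -> forall x, E x -> x <= real (Lub_Rbar E).
Proof.
  intros HB x Hx. destruct (Lub_Rbar_correct E) as [Hub Hlub].
  generalize (Hub x Hx) (Hlub (Finite B) HB).
  destruct (Lub_Rbar E); simpl; tauto.
Qed.

Lemma Lub_Rbar_real_least (E : R -> Prop) (x0 c : R) :
  E x0 -> (forall x, E x -> x <= c) -> real (Lub_Rbar E) <= c.
Proof.
  intros Hx0 Hc. destruct (Lub_Rbar_correct E) as [Hub Hlub].
  generalize (Hub x0 Hx0) (Hlub (Finite c) Hc).
  destruct (Lub_Rbar E); simpl; tauto.
Qed.

Lemma linf_norm_ge {I : Type} (s : I -> R) (i : I) :
  Defs.bounded s -> Rabs (s i) <= linf_norm s.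
Proof.
  intros [M HM]. apply (Lub_Rbar_real_ub _ M).
  - intros x [j ->]. apply HM.
  - exists i. reflexivity.
Qed.

Lemma linf_norm_le {I : Type} (s : I -> R) (M : R) :
  inhabited I -> (forall i, Rabs (s i) <= M) -> linf_norm s <= M.
Proof.
  intros [i0] HM. apply (Lub_Rbar_real_least _ (Rabs (s i0))).
  - exists i0. reflexivity.
  - intros x [j ->]. apply HM.
Qed.

Lemma lpos_of_le {I : Type} (s : I -> R) (B : R) :
  nonneg s -> (forall i, s i <= B) -> lpos s.
Proof.
  intros Hs HB. split; [exact Hs |].
  exists B. intros i. rewrite Rabs_pos_eq; [apply HB | apply Hs].
Qed.

Lemma Rmax_le_compat (a b x y : R) : a <= b -> x <= y -> Rmax a x <= Rmax b y.
Proof. intros Hab Hxy. unfold Rmax. repeat destruct Rle_dec; lra. Qed.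

Lemma lpos_le {I : Type} (s t : I -> R) : nonneg s -> fle s t -> lpos t -> lpos s.
Proof.
  intros Hs Hst [_ [M HM]]. split; [exact Hs |]. exists M. intros i.
  rewrite Rabs_pos_eq by apply Hs.
  apply (Rle_trans _ _ _ (Hst i)), (Rle_trans _ _ _ (Rle_abs _)), HM.
Qed.

Lemma lpos_zero {I : Type} : lpos (fun _ : I => 0).
Proof. apply (lpos_of_le _ 0); intros i; lra. Qed.

Lemma lpos_oplus {I : Type} (s t : I -> R) : lpos s -> lpos t -> lpos (oplus s t).
Proof.
  intros [Hs [Ms HMs]] [Ht [Mt HMt]]. apply (lpos_of_le _ (Rmax Ms Mt)).
  - intros i. apply (Rle_trans _ _ _ (Hs i) (Rmax_l _ _)).
  - intros i. apply Rmax_le_compat; apply (Rle_trans _ _ _ (Rle_abs _)); auto.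
Qed.

Lemma vanish_off_bounded {I : Type} (J : list I) (s : I -> R) :
  vanish_off J s -> Defs.bounded s.
Proof.
  intros Hs. set (B := fold_right (fun j acc => Rmax (Rabs (s j)) acc) 0 J).
  assert (HB : 0 <= B /\ forall j, In j J -> Rabs (s j) <= B).
  { subst B. clear Hs. induction J as [| a J [IH0 IH]]; simpl.
    - split; [lra | intros j []].
    - split; [apply (Rle_trans _ _ _ IH0 (Rmax_r _ _)) |].
      intros j [<- | Hj]; [apply Rmax_l |].
      apply (Rle_trans _ _ _ (IH j Hj) (Rmax_r _ _)). }
  exists B. intros i. destruct (classic (In i J)) as [Hi | Hi].
  - apply HB, Hi.
  - rewrite (Hs i Hi), Rabs_R0. apply HB.
Qed.

Lemma eventually_forall_In {I : Type} (J : list I) (P : nat -> I -> Prop) :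
  (forall j, In j J -> eventually (fun n => P n j)) ->
  eventually (fun n => forall j, In j J -> P n j).
Proof.
  induction J as [| a J IH]; intros HJ.
  - apply filter_forall. intros n j [].
  - apply (filter_imp (fun n => P n a /\ forall j, In j J -> P n j)).
    + intros n [Ha HP] j [<- | Hj]; auto.
    + apply filter_and; [apply HJ; left; reflexivity |].
      apply IH. intros j Hj. apply HJ. right. exact Hj.
Qed.

Lemma is_lim_seq_Rmax_l (a : R) (u : nat -> R) (l : R) :
  is_lim_seq u l -> is_lim_seq (fun n => Rmax a (u n)) (Rmax a l).
Proof.
  intros Hu. apply is_lim_seq_spec in Hu. apply is_lim_seq_spec. intros eps.
  apply (filter_imp (fun n => Rabs (u n - l) < eps)); [| apply Hu].
  intros n Hn. eapply Rle_lt_trans; [| exact Hn].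
  unfold Rmax; repeat destruct Rle_dec; unfold Rabs; repeat destruct Rcase_abs; lra.
Qed.

Lemma is_lim_seq_le_const (u : nat -> R) (l c : R) :
  is_lim_seq u l -> (forall n, u n <= c) -> l <= c.
Proof. intros Hu Hc. exact (is_lim_seq_le u (fun _ => c) l c Hc Hu (is_lim_seq_const c)). Qed.

Lemma is_lim_seq_ge_const (u : nat -> R) (l c : R) :
  is_lim_seq u l -> (forall n, c <= u n) -> c <= l.
Proof. intros Hu Hc. exact (is_lim_seq_le (fun _ => c) u c l Hc (is_lim_seq_const c) Hu). Qed.

Lemma wstar_cv_squeeze {I : Type} (lo u hi : nat -> I -> R) (l : I -> R) (M : R) :
  (forall n, nonneg (lo n)) -> (forall n, fle (lo n) (u n)) -> (forall n, fle (u n) (hi n)) ->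
  (forall n i, hi n i <= M) ->
  (forall i, is_lim_seq (fun n => lo n i) (l i)) ->
  (forall i, is_lim_seq (fun n => hi n i) (l i)) ->
  wstar_cv u l.
Proof.
  intros Hlo0 Hlo Hhi HM Hlol Hhil. split.
  - exists M. intros n i. rewrite Rabs_pos_eq.
    + apply (Rle_trans _ _ _ (Hhi n i) (HM n i)).
    + apply (Rle_trans _ _ _ (Hlo0 n i) (Hlo n i)).
  - intros i. apply (is_lim_seq_le_le (fun n => lo n i) _ (fun n => hi n i)).
    + intros n. split; [apply Hlo | apply Hhi].
    + apply Hlol.
    + apply Hhil.
Qed.

Lemma Kinf_le (g : R -> R) (x y : R) : Kinf g -> 0 <= x -> x <= y -> g x <= g y.
Proof.
  intros (_ & _ & _ & Hincr & _) Hx [Hxy | <-]; [left; apply Hincr; lra | lra].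
Qed.

Section GainOperator.

Context {I : Type} (Idec : forall x y : I, {x = y} + {x <> y})
  (Ii : I -> list I) (gam : I -> I -> R -> R) (mu : I -> (I -> R) -> Rbar).
Hypothesis Hgain : gain_operator Idec Ii gam mu.

Local Notation Gam := (Gamma Idec Ii gam mu).
Local Notation gain_input s i := (restr Idec (Ii i) (fun j => gam i j (s j))).

Lemma gain_input_vanish_off (s : I -> R) (i : I) : vanish_off (Ii i) (gain_input s i).
Proof.
  intros j Hj. unfold restr. destruct (in_dec Idec j (Ii i)); [contradiction | reflexivity].
Qed.

Lemma gain_input_lpos (s : I -> R) (i : I) : nonneg s -> lpos (gain_input s i).
Proof.
  intros Hs. pose proof Hgain as (_ & HK & _). split.
  - intros j. unfold restr. destruct (in_dec Idec j (Ii i)) as [Hj | _]; [| lra].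
    destruct (HK i j Hj) as (_ & Hpos & _). apply Hpos, Hs.
  - apply (vanish_off_bounded (Ii i)), gain_input_vanish_off.
Qed.

Lemma Gamma_finite (s : I -> R) (i : I) : nonneg s -> mu i (gain_input s i) = Finite (Gam s i).
Proof.
  intros Hs. pose proof Hgain as (_ & _ & _ & _ & _ & HM3 & _).
  unfold Gamma. symmetry.
  apply (proj1 (HM3 i (Ii i))); [apply gain_input_lpos, Hs | apply gain_input_vanish_off].
Qed.

Lemma Gamma_mono (s t : I -> R) : nonneg s -> fle s t -> fle (Gam s) (Gam t).
Proof.
  intros Hs Hst i. pose proof Hgain as (_ & HK & _ & _ & HM2 & _).
  assert (Ht : nonneg t) by (intros j; apply (Rle_trans _ _ _ (Hs j) (Hst j))).
  generalize (HM2 i _ _ (gain_input_lpos s i Hs) (gain_input_lpos t i Ht)).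
  rewrite (Gamma_finite s i Hs), (Gamma_finite t i Ht). intros HM. apply HM.
  intros j. unfold restr. destruct (in_dec Idec j (Ii i)) as [Hj | _]; [| lra].
  apply (Kinf_le _ _ _ (HK i j Hj) (Hs j) (Hst j)).
Qed.

Lemma Gamma_cont (u : nat -> I -> R) (l : I -> R) :
  inhabited I -> (forall n, nonneg (u n)) -> nonneg l ->
  (forall j, is_lim_seq (fun n => u n j) (l j)) ->
  forall i, is_lim_seq (fun n => Gam (u n) i) (Gam l i).
Proof.
  intros Hne Hu Hl Hlim i. pose proof Hgain as (_ & HK & _ & _ & _ & HM3 & _).
  apply is_lim_seq_spec. intros eps.
  destruct (proj2 (HM3 i (Ii i)) _ (gain_input_lpos l i Hl) (gain_input_vanish_off l i)
              eps (cond_pos eps)) as [d [Hd Hmu]].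
  assert (Hclose : eventually (fun n => forall j, In j (Ii i) ->
                     Rabs (gam i j (u n j) - gam i j (l j)) < d / 2)).
  { apply eventually_forall_In. intros j Hj.
    destruct (HK i j Hj) as (_ & _ & Hgam & _).
    destruct (Hgam (l j) (Hl j) (d / 2)) as [d' [Hd' Hgamd]]; [lra |].
    apply (filter_imp (fun n => Rabs (u n j - l j) < d')).
    - intros n Hn. apply Hgamd; [apply Hu | exact Hn].
    - exact (proj2 (is_lim_seq_spec _ _) (Hlim j) (mkposreal d' Hd')). }
  revert Hclose. apply filter_imp. intros n Hn. unfold Gamma.
  apply Hmu; [apply gain_input_lpos, Hu | apply gain_input_vanish_off |].
  apply (Rle_lt_trans _ (d / 2)); [| lra].
  apply linf_norm_le; [exact Hne |]. intros j. unfold restr.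
  destruct (in_dec Idec j (Ii i)) as [Hj | _].
  - left. apply Hn, Hj.
  - rewrite Rminus_0_r, Rabs_R0. lra.
Qed.

End GainOperator.

Section OplusMBI.

Context {I : Type} (G : (I -> R) -> I -> R).
Hypothesis G_mono : forall s t, nonneg s -> fle s t -> fle (G s) (G t).
Hypothesis G_cont : forall (u : nat -> I -> R) (l : I -> R),
  (forall n, nonneg (u n)) -> nonneg l -> (forall j, is_lim_seq (fun n => u n j) (l j)) ->
  forall i, is_lim_seq (fun n => G (u n) i) (G l i).
Variable phi : R -> R.
Hypothesis G_MBI : forall s b, lpos s -> lpos b -> fle s (oplus b (G s)) ->
  linf_norm s <= phi (linf_norm b).

Definition Goplus (b s : I -> R) : I -> R := oplus b (G s).

Local Notation iter b n s := (Nat.iter n (Goplus b) s).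

Lemma Goplus_ge (b s : I -> R) : fle b (Goplus b s).
Proof. intros i. apply Rmax_l. Qed.

Lemma Goplus_nonneg (b s : I -> R) : nonneg b -> nonneg (Goplus b s).
Proof. intros Hb i. apply (Rle_trans _ _ _ (Hb i) (Goplus_ge b s i)). Qed.

Lemma Goplus_mono (b1 b2 s t : I -> R) :
  nonneg s -> fle b1 b2 -> fle s t -> fle (Goplus b1 s) (Goplus b2 t).
Proof. intros Hs Hb Hst i. apply Rmax_le_compat; [apply Hb | apply G_mono; assumption]. Qed.

Lemma MBI_pointwise (b s : I -> R) :
  lpos b -> lpos s -> fle s (Goplus b s) -> forall i, s i <= phi (linf_norm b).
Proof.
  intros Hb Hs Hsub i. apply (Rle_trans _ _ _ (Rle_abs _)).
  apply (Rle_trans _ _ _ (linf_norm_ge s i (proj2 Hs))), G_MBI; assumption.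
Qed.

(* [y] need not be bounded: MBI is applied to the truncation [min(y, B + 1)],
   which is still post-fixed because it dominates [x]. *)
Lemma MBI_truncated (b x y : I -> R) :
  lpos b -> nonneg x -> (forall i, x i <= phi (linf_norm b)) ->
  fle x y -> fle y (Goplus b x) -> forall i, y i <= phi (linf_norm b).
Proof.
  intros Hb Hx HxB Hxy Hy. set (B := phi (linf_norm b)) in *.
  set (z := fun i => Rmin (y i) (B + 1)).
  assert (Hxz : fle x z).
  { intros i. apply Rmin_glb; [apply Hxy | specialize (HxB i); lra]. }
  assert (Hz : lpos z).
  { apply (lpos_of_le _ (B + 1)); intros i; [apply (Rle_trans _ _ _ (Hx i) (Hxz i)) | apply Rmin_r]. }
  assert (Hzsub : fle z (Goplus b z)).
  { intros i. apply (Rle_trans _ _ _ (Rmin_l _ _)), (Rle_trans _ _ _ (Hy i)).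
    apply Goplus_mono; [exact Hx | intros j; apply Rle_refl | exact Hxz]. }
  intros i. pose proof (MBI_pointwise b z Hb Hz Hzsub i) as Hzi.
  unfold z, Rmin in Hzi. fold B in Hzi. destruct (Rle_dec (y i) (B + 1)); lra.
Qed.

Lemma iter_Goplus_nonneg (b s : I -> R) (n : nat) :
  nonneg b -> nonneg s -> nonneg (iter b n s).
Proof. intros Hb Hs. destruct n as [| n]; [exact Hs | apply Goplus_nonneg, Hb]. Qed.

Lemma iter_Goplus_mono (b1 b2 s t : I -> R) (n : nat) :
  nonneg b1 -> nonneg s -> fle b1 b2 -> fle s t -> fle (iter b1 n s) (iter b2 n t).
Proof.
  intros Hb1 Hs Hb Hst. induction n as [| n IH]; [exact Hst |].
  apply Goplus_mono; [apply iter_Goplus_nonneg | |]; assumption.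
Qed.

Lemma iter_Goplus_le_pre_fixed (b s t : I -> R) (n : nat) :
  nonneg b -> nonneg s -> fle s t -> fle (Goplus b t) t -> fle (iter b n s) t.
Proof.
  intros Hb Hs Hst Ht. induction n as [| n IH]; [exact Hst |].
  intros i. apply (Rle_trans _ (Goplus b t i)); [| apply Ht].
  apply Goplus_mono; [apply iter_Goplus_nonneg | intros j; apply Rle_refl |]; assumption.
Qed.

Lemma iter_Goplus_ge_post_fixed (b s t : I -> R) (n : nat) :
  nonneg b -> nonneg s -> fle s t -> fle s (Goplus b s) -> fle s (iter b n t).
Proof.
  intros Hb Hs Hst Hsub. induction n as [| n IH]; [exact Hst |].
  intros i. apply (Rle_trans _ (Goplus b s i)); [apply Hsub |].
  apply Goplus_mono; [exact Hs | intros j; apply Rle_refl | exact IH].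
Qed.

Lemma iter_Goplus_incr (b s : I -> R) (n : nat) :
  nonneg b -> nonneg s -> fle s (Goplus b s) -> fle (iter b n s) (iter b (S n) s).
Proof.
  intros Hb Hs Hsub. rewrite Nat.iter_succ_r.
  apply iter_Goplus_mono; [exact Hb | exact Hs | intros j; apply Rle_refl | exact Hsub].
Qed.

Lemma iter_Goplus_decr (b s : I -> R) (n : nat) :
  nonneg b -> fle (Goplus b s) s -> fle (iter b (S n) s) (iter b n s).
Proof.
  intros Hb Hpre. rewrite Nat.iter_succ_r.
  apply iter_Goplus_mono; [exact Hb | apply Goplus_nonneg, Hb | intros j; apply Rle_refl | exact Hpre].
Qed.

Lemma iter_Goplus_lim_fixed (b s l : I -> R) :
  nonneg b -> nonneg s -> (forall i, is_lim_seq (fun n => iter b n s i) (l i)) ->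
  forall i, Goplus b l i = l i.
Proof.
  intros Hb Hs Hl i.
  assert (Hl0 : nonneg l).
  { intros j. apply (is_lim_seq_ge_const _ _ _ (Hl j)). intros n. apply iter_Goplus_nonneg; assumption. }
  assert (Hnext : is_lim_seq (fun n => iter b (S n) s i) (Goplus b l i)).
  { apply is_lim_seq_Rmax_l, G_cont; [intros n; apply iter_Goplus_nonneg | |]; assumption. }
  pose proof (proj1 (is_lim_seq_incr_1 _ _) (Hl i)) as Hshift.
  apply is_lim_seq_unique in Hshift, Hnext. rewrite Hshift in Hnext. now injection Hnext.
Qed.

Definition lfp (b : I -> R) (i : I) : R := real (Lim_seq (fun n => iter b n (fun _ => 0) i)).

Lemma iter_zero_le_bound (b : I -> R) (n : nat) :
  lpos b -> forall i, iter b n (fun _ => 0) i <= phi (linf_norm b).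
Proof.
  intros Hb. pose proof (proj1 (@lpos_zero I)) as H0.
  assert (Hsub0 : fle (fun _ => 0) (Goplus b (fun _ => 0))) by apply (Goplus_nonneg _ _ (proj1 Hb)).
  induction n as [| n IH].
  - apply (MBI_pointwise b _ Hb lpos_zero Hsub0).
  - apply (MBI_truncated b (iter b n (fun _ => 0))); [exact Hb | | exact IH | | intros j; apply Rle_refl].
    + apply iter_Goplus_nonneg; [exact (proj1 Hb) | exact H0].
    + apply iter_Goplus_incr; [exact (proj1 Hb) | exact H0 | exact Hsub0].
Qed.

Lemma lfp_is_lim (b : I -> R) :
  lpos b -> forall i, is_lim_seq (fun n => iter b n (fun _ => 0) i) (lfp b i).
Proof.
  intros Hb i. apply Lim_seq_correct', (ex_finite_lim_seq_incr _ (phi (linf_norm b))); intros n.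
  - apply iter_Goplus_incr; [exact (proj1 Hb) | intros j; apply Rle_refl | exact (Goplus_nonneg _ _ (proj1 Hb))].
  - apply iter_zero_le_bound, Hb.
Qed.

Lemma lfp_fixed (b : I -> R) : lpos b -> forall i, Goplus b (lfp b) i = lfp b i.
Proof.
  intros Hb. apply (iter_Goplus_lim_fixed b (fun _ => 0)); [exact (proj1 Hb) | intros j; apply Rle_refl |].
  apply lfp_is_lim, Hb.
Qed.

Lemma lfp_le_bound (b : I -> R) : lpos b -> forall i, lfp b i <= phi (linf_norm b).
Proof.
  intros Hb i. apply (is_lim_seq_le_const _ _ _ (lfp_is_lim b Hb i)).
  intros n. apply iter_zero_le_bound, Hb.
Qed.

Lemma lfp_lpos (b : I -> R) : lpos b -> lpos (lfp b).
Proof.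
  intros Hb. apply (lpos_of_le _ (phi (linf_norm b))); [| apply lfp_le_bound, Hb].
  intros i. apply (is_lim_seq_ge_const _ _ _ (lfp_is_lim b Hb i)).
  intros n. apply iter_Goplus_nonneg; [exact (proj1 Hb) | intros j; apply Rle_refl].
Qed.

Lemma lfp_least (b s : I -> R) : lpos b -> nonneg s -> fle (Goplus b s) s -> fle (lfp b) s.
Proof.
  intros Hb Hs Hpre i. apply (is_lim_seq_le_const _ _ _ (lfp_is_lim b Hb i)).
  intros n. apply iter_Goplus_le_pre_fixed; [exact (proj1 Hb) | intros j; apply Rle_refl | exact Hs | exact Hpre].
Qed.

Definition post_fixed (b s : I -> R) : Prop := lpos s /\ fle s (Goplus b s).

Definition gfp (b : I -> R) (i : I) : R :=
  real (Lub_Rbar (fun x => exists s, post_fixed b s /\ x = s i)).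

Lemma post_fixed_zero (b : I -> R) : nonneg b -> post_fixed b (fun _ => 0).
Proof. intros Hb. split; [exact lpos_zero | exact (Goplus_nonneg _ _ Hb)]. Qed.

Lemma gfp_greatest (b s : I -> R) : lpos b -> post_fixed b s -> fle s (gfp b).
Proof.
  intros Hb Hs i. apply (Lub_Rbar_real_ub _ (phi (linf_norm b))).
  - intros x [t [[Ht Htsub] ->]]. apply MBI_pointwise; assumption.
  - exists s. split; [exact Hs | reflexivity].
Qed.

Lemma gfp_le_bound (b : I -> R) : lpos b -> forall i, gfp b i <= phi (linf_norm b).
Proof.
  intros Hb i. apply (Lub_Rbar_real_least _ 0).
  - exists (fun _ => 0). split; [exact (post_fixed_zero b (proj1 Hb)) | reflexivity].
  - intros x [t [[Ht Htsub] ->]]. apply MBI_pointwise; assumption.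
Qed.

Lemma gfp_lpos (b : I -> R) : lpos b -> lpos (gfp b).
Proof.
  intros Hb. apply (lpos_of_le _ (phi (linf_norm b))); [| apply gfp_le_bound, Hb].
  apply (gfp_greatest b _ Hb (post_fixed_zero b (proj1 Hb))).
Qed.

Lemma gfp_le_Goplus (b : I -> R) : lpos b -> fle (gfp b) (Goplus b (gfp b)).
Proof.
  intros Hb i. apply (Lub_Rbar_real_least _ 0).
  - exists (fun _ => 0). split; [exact (post_fixed_zero b (proj1 Hb)) | reflexivity].
  - intros x [s [[Hs Hsub] ->]]. apply (Rle_trans _ _ _ (Hsub i)).
    apply Goplus_mono; [exact (proj1 Hs) | intros j; apply Rle_refl | apply gfp_greatest; [exact Hb | split; assumption]].
Qed.

(* [MBI_truncated] makes [Goplus b (gfp b)] bounded, hence a competitor in the supremum. *)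
Lemma gfp_fixed (b : I -> R) : lpos b -> forall i, Goplus b (gfp b) i = gfp b i.
Proof.
  intros Hb. pose proof (gfp_le_Goplus b Hb) as Hsub. pose proof (gfp_lpos b Hb) as Hh.
  assert (Hnext : post_fixed b (Goplus b (gfp b))).
  { split.
    - apply (lpos_of_le _ (phi (linf_norm b))); [exact (Goplus_nonneg _ _ (proj1 Hb)) |].
      apply (MBI_truncated b (gfp b)); [exact Hb | exact (proj1 Hh) | apply gfp_le_bound, Hb | exact Hsub |].
      intros j. apply Rle_refl.
    - apply Goplus_mono; [exact (proj1 Hh) | intros j; apply Rle_refl | exact Hsub]. }
  intros i. apply Rle_antisym; [apply (gfp_greatest b _ Hb Hnext) | apply Hsub].
Qed.

Lemma iter_cv_lfp (b s : I -> R) :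
  lpos b -> lpos s -> fle s (lfp b) -> wstar_cv (fun n => iter b n s) (lfp b).
Proof.
  intros Hb Hs Hss. pose proof (proj1 Hb) as Hb0.
  apply (wstar_cv_squeeze (fun n => iter b n (fun _ => 0)) _ (fun _ => lfp b) _ (phi (linf_norm b))).
  - intros n. apply iter_Goplus_nonneg; [exact Hb0 | intros j; apply Rle_refl].
  - intros n. apply iter_Goplus_mono; [exact Hb0 | intros j; apply Rle_refl | intros j; apply Rle_refl | exact (proj1 Hs)].
  - intros n. apply iter_Goplus_le_pre_fixed; [exact Hb0 | exact (proj1 Hs) | exact Hss |].
    intros i. rewrite lfp_fixed by exact Hb. apply Rle_refl.
  - intros _. apply lfp_le_bound, Hb.
  - apply lfp_is_lim, Hb.
  - intros i. apply is_lim_seq_const.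
Qed.

Lemma iter_cv_gfp_from_pre_fixed (b t : I -> R) :
  lpos b -> lpos t -> fle (Goplus b t) t -> fle (gfp b) t ->
  forall i, is_lim_seq (fun n => iter b n t i) (gfp b i).
Proof.
  intros Hb Ht Hpre Hht. pose proof (proj1 Hb) as Hb0. pose proof (gfp_lpos b Hb) as Hh.
  assert (Hlow : forall n, fle (gfp b) (iter b n t)).
  { intros n. apply iter_Goplus_ge_post_fixed; [exact Hb0 | exact (proj1 Hh) | exact Hht |].
    intros i. rewrite gfp_fixed by exact Hb. apply Rle_refl. }
  set (w := fun i => real (Lim_seq (fun n => iter b n t i))).
  assert (Hw : forall i, is_lim_seq (fun n => iter b n t i) (w i)).
  { intros i. apply Lim_seq_correct', (ex_finite_lim_seq_decr _ 0); intros n.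
    - apply iter_Goplus_decr; assumption.
    - apply (Rle_trans _ _ _ (proj1 Hh i) (Hlow n i)). }
  assert (Hwpost : post_fixed b w).
  { split.
    - apply (lpos_le _ t); [| | exact Ht].
      + intros i. apply (is_lim_seq_ge_const _ _ _ (Hw i)). intros n.
        apply (Rle_trans _ _ _ (proj1 Hh i) (Hlow n i)).
      + intros i. apply (is_lim_seq_le_const _ _ _ (Hw i)). intros n.
        apply iter_Goplus_le_pre_fixed; [exact Hb0 | exact (proj1 Ht) | intros j; apply Rle_refl | exact Hpre].
    - intros i. rewrite (iter_Goplus_lim_fixed b t w Hb0 (proj1 Ht) Hw). apply Rle_refl. }
  intros i. replace (gfp b i) with (w i); [apply Hw |].
  apply Rle_antisym; [apply (gfp_greatest b w Hb Hwpost) |].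
  apply (is_lim_seq_ge_const _ _ _ (Hw i)). intros n. apply Hlow.
Qed.

Lemma iter_cv_gfp (b s : I -> R) :
  lpos b -> lpos s -> fle (gfp b) s -> wstar_cv (fun n => iter b n s) (gfp b).
Proof.
  intros Hb Hs Hhs. pose proof (proj1 Hb) as Hb0. pose proof (gfp_lpos b Hb) as Hh.
  set (b' := oplus b s). assert (Hb' : lpos b') by (apply lpos_oplus; assumption).
  set (t := gfp b'). pose proof (gfp_lpos b' Hb') as Ht.
  assert (Htfix : forall i, Goplus b' t i = t i) by exact (gfp_fixed b' Hb').
  assert (Hpre : fle (Goplus b t) t).
  { intros i. rewrite <- (Htfix i).
    apply Goplus_mono; [exact (proj1 Ht) | intros j; apply Rmax_l | intros j; apply Rle_refl]. }
  assert (Hst : fle s t).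
  { intros i. rewrite <- (Htfix i). apply (Rle_trans _ (b' i)); [apply Rmax_r | apply Goplus_ge]. }
  apply (wstar_cv_squeeze (fun _ => gfp b) _ (fun n => iter b n t) _ (phi (linf_norm b'))).
  - intros _. exact (proj1 Hh).
  - intros n. apply iter_Goplus_ge_post_fixed; [exact Hb0 | exact (proj1 Hh) | exact Hhs |].
    intros i. rewrite gfp_fixed by exact Hb. apply Rle_refl.
  - intros n. apply iter_Goplus_mono; [exact Hb0 | exact (proj1 Hs) | intros j; apply Rle_refl | exact Hst].
  - intros n i. apply (Rle_trans _ (t i)); [| apply gfp_le_bound, Hb'].
    apply iter_Goplus_le_pre_fixed; [exact Hb0 | exact (proj1 Ht) | intros j; apply Rle_refl | exact Hpre].
  - intros i. apply is_lim_seq_const.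
  - apply iter_cv_gfp_from_pre_fixed; [exact Hb | exact Ht | exact Hpre |].
    intros i. apply (Rle_trans _ _ _ (Hhs i) (Hst i)).
Qed.

Lemma lfp_mono (b1 b2 : I -> R) : lpos b1 -> lpos b2 -> fle b1 b2 -> fle (lfp b1) (lfp b2).
Proof.
  intros Hb1 Hb2 Hb. apply lfp_least; [exact Hb1 | exact (proj1 (lfp_lpos b2 Hb2)) |].
  intros i. rewrite <- (lfp_fixed b2 Hb2 i).
  apply Goplus_mono; [exact (proj1 (lfp_lpos b2 Hb2)) | exact Hb | intros j; apply Rle_refl].
Qed.

Lemma gfp_mono (b1 b2 : I -> R) : lpos b1 -> lpos b2 -> fle b1 b2 -> fle (gfp b1) (gfp b2).
Proof.
  intros Hb1 Hb2 Hb. pose proof (gfp_lpos b1 Hb1) as Hh1.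
  apply gfp_greatest; [exact Hb2 | split; [exact Hh1 |]].
  intros i. rewrite <- (gfp_fixed b1 Hb1 i).
  apply Goplus_mono; [exact (proj1 Hh1) | exact Hb | intros j; apply Rle_refl].
Qed.

End OplusMBI.

Theorem proposition3p6
  (I : Type) (Idec : forall x y : I, {x = y} + {x <> y})
  (I_ne : inhabited I)
  (I_count : exists enc : I -> nat, forall x y, enc x = enc y -> x = y)
  (Ii : I -> list I) (gam : I -> I -> R -> R) (mu : I -> (I -> R) -> Rbar)
  (Hgain : gain_operator Idec Ii gam mu)
  (HMBI : oplus_MBI (Gamma Idec Ii gam mu)) :
  let Gb := fun b s => oplus b (Gamma Idec Ii gam mu s) in
  exists lfp gfp : (I -> R) -> (I -> R),
    (forall b, lpos b ->
       lpos (lfp b) /\ (forall i, Gb b (lfp b) i = lfp b i) /\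
       lpos (gfp b) /\ (forall i, Gb b (gfp b) i = gfp b i) /\
       (* (a) *)
       (forall s, lpos s -> (forall i, Gb b s i = s i) -> fle (lfp b) s /\ fle s (gfp b)) /\
       (* (c) *)
       (forall s, lpos s -> fle s (lfp b) ->
          wstar_cv (fun n => Nat.iter n (Gb b) s) (lfp b)) /\
       (* (d) *)
       (forall s, lpos s -> fle (gfp b) s ->
          wstar_cv (fun n => Nat.iter n (Gb b) s) (gfp b))) /\
    (* (b) *)
    (forall b1 b2, lpos b1 -> lpos b2 -> fle b1 b2 ->
       fle (lfp b1) (lfp b2) /\ fle (gfp b1) (gfp b2)).
Proof.
  intros Gb. change Gb with (Goplus (Gamma Idec Ii gam mu)). clear Gb.
  destruct HMBI as [phi [_ Hphi]].
  pose proof (Gamma_mono Idec Ii gam mu Hgain) as Hmono.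
  pose proof (fun u l => Gamma_cont Idec Ii gam mu Hgain u l I_ne) as Hcont.
  exists (lfp (Gamma Idec Ii gam mu)), (gfp (Gamma Idec Ii gam mu)). split.
  - intros b Hb. split; [| split; [| split; [| split; [| split; [| split]]]]].
    + exact (lfp_lpos _ Hmono phi Hphi b Hb).
    + exact (lfp_fixed _ Hmono Hcont phi Hphi b Hb).
    + exact (gfp_lpos _ phi Hphi b Hb).
    + exact (gfp_fixed _ Hmono phi Hphi b Hb).
    + intros s Hs Hfix. split.
      * apply (lfp_least _ Hmono phi Hphi b s Hb (proj1 Hs)).
        intros i. rewrite Hfix. apply Rle_refl.
      * apply (gfp_greatest _ phi Hphi b s Hb). split; [exact Hs |].
        intros i. rewrite Hfix. apply Rle_refl.
    + intros s. exact (iter_cv_lfp _ Hmono Hcont phi Hphi b s Hb).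
    + intros s. exact (iter_cv_gfp _ Hmono Hcont phi Hphi b s Hb).
  - intros b1 b2 H1 H2 H12. split.
    + exact (lfp_mono _ Hmono Hcont phi Hphi b1 b2 H1 H2 H12).
    + exact (gfp_mono _ Hmono phi Hphi b1 b2 H1 H2 H12).
Qed.
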